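(* For every task $T=(\mathcal{I},\mathcal{O},\Delta)$ there is a sequential object $S$ with two operations, $\mathsf{set}(\mathrm{id}_i,x_i)$ (returning nothing) and $\mathsf{get}(\mathrm{id}_i)$ (returning a value $y_i$), and a bijection $\alpha$ between $VE(T)$ and $SSpec(S)$ such that, for every $E\in VE(T)$: (1) each invocation or response of process $\mathrm{id}_i$ in $E$ is mapped to an operation of process $\mathrm{id}_i$ in $\alpha(E)$; and (2) each invocation in $E$ with input $x$ is mapped to a completed $\mathsf{set}$ operation with input $x$, and each response in $E$ with output $y$ is mapped to a completed $\mathsf{get}$ operation with output $y$.
   Context: Simplexes and tasks. Processes have distinct identities $\mathrm{id}_1,\dots,\mathrm{id}_n$. A simplex is a finite set of pairs $\{(\mathrm{id}_1,x_1),\dots,(\mathrm{id}_k,x_k)\}$ with distinct identities (vertices); $\mathrm{ID}(\sigma)$ is the set of identities in $\sigma$ and $\dim(\sigma)=|\sigma|-1$. A complex is a set of simplexes closed under nonempty subsets (faces); it is pure of dimension $d$ if each simplex is a face of a $d$-dimensional one. A task for $n$ processes is a triple $T=(\mathcal{I},\mathcal{O},\Delta)$ where $\mathcal{I},\mathcal{O}$ are pure $(n-1)$-dimensional complexes of such (chromatic) simplexes and $\Delta$ maps each $\sigma\in\mathcal{I}$ to a subcomplex $\Delta(\sigma)$ of $\mathcal{O}$ such that: $\Delta(\sigma)$ is pure of dimension $\dim(\sigma)$; every $\tau\in\Delta(\sigma)$ with $\dim\tau=\dim\sigma$ has $\mathrm{ID}(\tau)=\mathrm{ID}(\sigma)$;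 and $\sigma'\subset\sigma$ implies $\Delta(\sigma')\subset\Delta(\sigma)$. The task has a single one-shot operation: process $\mathrm{id}_i$ may invoke it with input $x_i$ (event $inv(\mathrm{id}_i,x_i)$) if $(\mathrm{id}_i,x_i)$ is a vertex of $\mathcal{I}$, and may receive response $y_i$ (event $resp(\mathrm{id}_i):y_i$) if $(\mathrm{id}_i,y_i)$ is a vertex of $\mathcal{O}$. Executions and $VE(T)$. An execution is a sequence of invocation and response events, well-formed (a response of a process follows its pending invocation), in which each process invokes the task at most once. $\sigma_E$ is the set of $(\mathrm{id}_i,x_i)$ such that $E$ contains $inv(\mathrm{id}_i,x_i)$, and $\tau_E$ the set of $(\mathrm{id}_i,y_i)$ such that $E$ contains $resp(\mathrm{id}_i):y_i$. $E$ satisfies $T$ if for every prefix $E'$ of $E$, $\tau_{E'}\in\Delta(\sigma_{E'})$. $VE(T)$ is the set of all executions consisting only of invocations and responses that satisfy $T$. Sequential objects. A sequential object is a (possibly nondeterministic) Mealy machine $(Q,Inv,Res,\delta)$ with a single initial state, $\delta(q,in)$ a set of pairs $(q',r)$ with the next state determined by the response $r$. A sequential execution is an alternating sequence $in_0,r_0,in_1,r_1,\dots$ of invocations and responses generated by $\delta$ from the initial state. Here $SSpec(S)$ denotes the set of all sequential executions of $S$ in which each process invokes at most two operations, first $\mathsf{set}$ and then $\mathsf{get}$, in that order. *)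

From mathcomp Require Import all_boot.
Set Implicit Arguments. Unset Strict Implicit. Unset Printing Implicit Defensive.

Section Defs.
Variable n : nat.

(** Chromatic simplexes over value type V: a partial map from process
    identities 'I_n to values; vertex (i,v) is present iff s i = Some v.
    This encodes "a finite set of (id,value) pairs with distinct ids". *)
Definition simplex (V : Type) := {ffun 'I_n -> option V}.

Definition sID V (s : simplex V) : {set 'I_n} := [set i | isSome (s i)].
Definition nonempty V (s : simplex V) : Prop := sID s != set0.
Definition is_face V (s' s : simplex V) : Prop :=
  forall i v, s' i = Some v -> s i = Some v.

Definition is_complex V (K : simplex V -> Prop) : Prop :=
  (forall s, K s -> nonempty s) /\
  (forall s s', K s -> nonempty s' -> is_face s' s -> K s').

(* pure of dimension k-1, i.e. every simplex is a face of one with k vertices *)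
Definition pure_card V (K : simplex V -> Prop) (k : nat) : Prop :=
  forall s, K s -> exists t, K t /\ is_face s t /\ #|sID t| = k.

Record task (In Out : Type) := Task {
  tI : simplex In -> Prop;
  tO : simplex Out -> Prop;
  tD : simplex In -> simplex Out -> Prop
}.

Definition is_task In Out (T : task In Out) : Prop :=
  is_complex (tI T) /\ pure_card (tI T) n /\
  is_complex (tO T) /\ pure_card (tO T) n /\
  forall s, tI T s ->
    ((forall t, tD T s t -> tO T t) /\ is_complex (tD T s)) /\
    pure_card (tD T s) #|sID s| /\
    (forall t, tD T s t -> #|sID t| = #|sID s| -> sID t = sID s) /\
    (forall s', tI T s' -> is_face s' s -> forall t, tD T s' t -> tD T s t).

Inductive event (In Out : Type) :=
  | EInv of 'I_n & In
  | EResp of 'I_n & Out.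
Arguments EInv {In Out}.
Arguments EResp {In Out}.

Fixpoint inputs_of In Out (E : seq (event In Out)) (i : 'I_n) : option In :=
  match E with
  | [::] => None
  | EInv j x :: E' => if j == i then Some x else inputs_of E' i
  | _ :: E' => inputs_of E' i
  end.

Fixpoint outputs_of In Out (E : seq (event In Out)) (i : 'I_n) : option Out :=
  match E with
  | [::] => None
  | EResp j y :: E' => if j == i then Some y else outputs_of E' i
  | _ :: E' => outputs_of E' i
  end.

Definition sigma_E In Out (E : seq (event In Out)) : simplex In :=
  [ffun i => inputs_of E i].
Definition tau_E In Out (E : seq (event In Out)) : simplex Out :=
  [ffun i => outputs_of E i].

Definition well_formed In Out (E : seq (event In Out)) : Prop :=
  (forall k1 k2 i x1 x2, onth E k1 = Some (EInv i x1) ->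
       onth E k2 = Some (EInv i x2) -> k1 = k2) /\
  (forall k i y, onth E k = Some (EResp i y) ->
     (exists k' x, k' < k /\ onth E k' = Some (EInv i x)) /\
     (forall k' y', k' < k -> onth E k' <> Some (EResp i y'))).

Definition satisfies In Out (T : task In Out) (E : seq (event In Out)) : Prop :=
  forall m,
    (nonempty (sigma_E (take m E)) -> tI T (sigma_E (take m E))) /\
    (nonempty (tau_E (take m E)) ->
       tD T (sigma_E (take m E)) (tau_E (take m E))).

Definition VE In Out (T : task In Out) (E : seq (event In Out)) : Prop :=
  well_formed E /\ satisfies T E.

Record seq_object (Inv Res : Type) := SeqObject {
  st : Type;
  q0 : st;
  delta : st -> Inv -> st -> Res -> Prop;
  delta_det : forall q a q1 q2 r, delta q a q1 r -> delta q a q2 r -> q1 = q2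
}.

Fixpoint runs Inv Res (S : seq_object Inv Res) (q : st S) (s : seq (Inv * Res))
  : Prop :=
  match s with
  | [::] => True
  | (a, r) :: s' => exists q', delta q a q' r /\ runs q' s'
  end.

Definition seq_exec Inv Res (S : seq_object Inv Res) (s : seq (Inv * Res)) :=
  runs (q0 S) s.

Inductive sinv (In : Type) := SSet of 'I_n & In | SGet of 'I_n.
Inductive sres (Out : Type) := RAck | RVal of Out.
Arguments SSet {In}.
Arguments SGet {In}.
Arguments RAck {Out}.
Arguments RVal {Out}.

Definition set_get_typed In Out (S : seq_object (sinv In) (sres Out)) : Prop :=
  (forall (q : st S) i x q' r, delta q (SSet i x) q' r -> r = RAck) /\
  (forall (q : st S) i q' r, delta q (SGet i) q' r -> exists y, r = RVal y).

Definition SSpec In Out (S : seq_object (sinv In) (sres Out))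
  (s : seq (sinv In * sres Out)) : Prop :=
  seq_exec S s /\
  (forall k1 k2 i x1 x2 r1 r2, onth s k1 = Some (SSet i x1, r1) ->
       onth s k2 = Some (SSet i x2, r2) -> k1 = k2) /\
  (forall k1 k2 i r1 r2, onth s k1 = Some (SGet i, r1) ->
       onth s k2 = Some (SGet i, r2) -> k1 = k2) /\
  (forall k i r, onth s k = Some (SGet i, r) ->
       exists k' x r', k' < k /\ onth s k' = Some (SSet i x, r')).

Definition event_maps_to In Out (ev : event In Out)
  (op : option (sinv In * sres Out)) : Prop :=
  match ev, op with
  | EInv i x, Some (SSet j x', _) => j = i /\ x' = x
  | EResp i y, Some (SGet j, RVal y') => j = i /\ y' = y
  | _, _ => False
  end.

End Defs.

From mathcomp Require Import all_boot.
Set Implicit Arguments. Unset Strict Implicit. Unset Printing Implicit Defensive.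

(** The sequential object records the execution seen so far: [set(i,x)]
    appends the invocation [inv(i,x)], [get(i)] returning [y] appends the
    response [resp(i):y], and an operation is enabled exactly when the
    extended execution is still in VE(T).  Because VE(T) is closed under
    prefixes, the runs of this object are exactly the translations of the
    executions of VE(T), event by event; this translation is the bijection. *)

Lemma onth_take_ltn (T : Type) (s : seq T) m k :
  k < m -> onth (take m s) k = onth s k.
Proof. by move=> lt_km; rewrite !onthE map_take nth_take. Qed.

Lemma onth_take_Some (T : Type) (s : seq T) m k x :
  onth (take m s) k = Some x -> k < m /\ onth s k = Some x.
Proof.
move=> skx; have lt_km : k < m.
  by have := onthTE (take m s) k; rewrite skx size_take_min ltn_min => /esym/andP[].
by rewrite -(onth_take_ltn s lt_km).
Qed.

Section HistoryObject.
Variables (n : nat) (In Out : Type).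
Variable T : task n In Out.
Implicit Types (E q : seq (event n In Out)) (ev : event n In Out).

Lemma well_formed_take E m : well_formed E -> well_formed (take m E).
Proof.
move=> [inv_once resp_after]; split.
  move=> k1 k2 i x1 x2 e1 e2.
  exact: inv_once (onth_take_Some e1).2 (onth_take_Some e2).2.
move=> k i y ek_take; have [lt_km ek] := onth_take_Some ek_take.
have [[k' [x [lt_k'k ek']]] no_resp] := resp_after _ _ _ ek.
have take_k' k'' : k'' < k -> onth (take m E) k'' = onth E k''.
  by move=> lt_k''k; rewrite onth_take_ltn // (ltn_trans lt_k''k).
split; first by exists k', x; rewrite take_k'.
by move=> k'' y' lt_k''k; rewrite take_k' //; apply: no_resp.
Qed.

Lemma VE_take E m : VE T E -> VE T (take m E).
Proof.
move=> [wfE satE]; split; first exact: well_formed_take.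
by move=> m'; rewrite -take_min; apply: satE.
Qed.

Lemma VE_rcons q ev E : VE T (q ++ ev :: E) -> VE T (rcons q ev).
Proof.
by rewrite -cat_rcons => /(VE_take (size (rcons q ev))); rewrite take_size_cat.
Qed.

Lemma VE_nil : VE T [::].
Proof.
have sID_nil V : sID [ffun=> None : option V] = set0.
  by apply/setP => i; rewrite !inE ffunE.
split; first by split=> [k1 k2 i x1 x2|k i y]; rewrite onth0n.
by move=> m; rewrite /nonempty /sigma_E /tau_E /= !sID_nil eqxx.
Qed.

Definition op_of_event ev : sinv n In * sres Out :=
  match ev with
  | EInv i x => (SSet i x, RAck Out)
  | EResp i y => (SGet In i, RVal y)
  end.

Definition event_of_op (p : sinv n In * sres Out) : option (event n In Out) :=
  match p with
  | (SSet i x, RAck) => Some (EInv Out i x)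
  | (SGet i, RVal y) => Some (EResp In i y)
  | _ => None
  end.

Lemma op_of_eventK : pcancel op_of_event event_of_op.
Proof. by case. Qed.

Lemma event_of_op_Some p ev : event_of_op p = Some ev -> p = op_of_event ev.
Proof. by case: p => [[i x|i] [|y]] //= [<-]. Qed.

Lemma op_of_event_inj : injective op_of_event.
Proof. exact: pcan_inj op_of_eventK. Qed.

Lemma onth_map_op_of_event_set E k i x r :
  onth (map op_of_event E) k = Some (SSet i x, r) -> onth E k = Some (EInv Out i x).
Proof. by rewrite onth_map; case: onth => [[j x'|j y]|] //= [-> ->]. Qed.

Lemma onth_map_op_of_event_get E k i r :
  onth (map op_of_event E) k = Some (SGet In i, r) -> exists y, onth E k = Some (EResp In i y).
Proof. by rewrite onth_map; case: onth => [[j x|j y]|] //= [->]; exists y. Qed.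

Definition history_step q (a : sinv n In) q' (r : sres Out) : Prop :=
  exists2 ev, event_of_op (a, r) = Some ev & q' = rcons q ev /\ VE T q'.

Lemma history_step_det q a q1 q2 r :
  history_step q a q1 r -> history_step q a q2 r -> q1 = q2.
Proof. by move=> [ev1 e1 [-> _]] [ev2 e2 [-> _]]; move: e1; rewrite e2 => -[->]. Qed.

Definition history_object : seq_object (sinv n In) (sres Out) :=
  SeqObject [::] history_step_det.

Lemma history_object_set_get : set_get_typed history_object.
Proof.
split=> [q i x q' [|y] [ev]|q i q' [|y] [ev]] //=.
by exists y.
Qed.

Lemma runs_historyP q s : VE T q ->
  runs (S := history_object) q s <->
  exists2 E, s = map op_of_event E & VE T (q ++ E).
Proof.
elim: s q => [|[a r] s IHs] q VEq /=.
  by split=> // _; exists [::]; rewrite ?cats0.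
split.
  move=> [_ [[ev e_ar [-> VEq']] run_s]].
  have [E -> VE_E] := (IHs _ VEq').1 run_s.
  by exists (ev :: E); rewrite ?(event_of_op_Some e_ar) // -cat_rcons.
move=> [[|ev E] //= [e_ar s_E] VE_E].
exists (rcons q ev); split.
  by exists ev; rewrite ?e_ar ?op_of_eventK //; split=> //; apply: VE_rcons VE_E.
by apply/(IHs _ (VE_rcons VE_E)); exists E; rewrite ?cat_rcons.
Qed.

Lemma SSpec_history E : VE T E -> SSpec history_object (map op_of_event E).
Proof.
move=> VE_E; have [[inv_once resp_after] _] := VE_E.
split; first by apply/(runs_historyP _ VE_nil); exists E.
split.
  move=> k1 k2 i x1 x2 r1 r2 /onth_map_op_of_event_set e1 /onth_map_op_of_event_set e2.
  exact: inv_once e1 e2.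
split.
  move=> k1 k2 i r1 r2 /onth_map_op_of_event_get[y1 e1] /onth_map_op_of_event_get[y2 e2].
  have [_ no_resp1] := resp_after _ _ _ e1; have [_ no_resp2] := resp_after _ _ _ e2.
  case: (ltngtP k1 k2) => // lt_k.
    by case: (no_resp2 _ _ lt_k e1).
  by case: (no_resp1 _ _ lt_k e2).
move=> k i r /onth_map_op_of_event_get[y ek].
have [[k' [x [lt_k'k ek']]] _] := resp_after _ _ _ ek.
by exists k', x, (RAck Out); rewrite onth_map ek'.
Qed.

Lemma SSpec_historyP s :
  SSpec history_object s -> exists2 E, VE T E & map op_of_event E = s.
Proof. by move=> [/(runs_historyP _ VE_nil) [E -> VE_E] _]; exists E. Qed.

End HistoryObject.

Theorem theorem1 (n : nat) (In Out : Type) (T : task n In Out) :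
  is_task T ->
  exists S : seq_object (sinv n In) (sres Out),
    set_get_typed S /\
    exists alpha : seq (event n In Out) -> seq (sinv n In * sres Out),
      (forall E, VE T E -> SSpec S (alpha E)) /\
      (forall E1 E2, VE T E1 -> VE T E2 -> alpha E1 = alpha E2 -> E1 = E2) /\
      (forall s, SSpec S s -> exists E, VE T E /\ alpha E = s) /\
      (forall E, VE T E ->
         exists f : nat -> nat, forall k ev, onth E k = Some ev ->
           event_maps_to ev (onth (alpha E) (f k))).
Proof.
move=> _; exists (history_object T); split; first exact: history_object_set_get.
exists (map (@op_of_event n In Out)); split; first exact: SSpec_history.
split; first by move=> E1 E2 _ _; apply/inj_map/op_of_event_inj.
split; first by move=> s /SSpec_historyP[E]; exists E.
by move=> E _; exists id => k ev; rewrite onth_map => ->; case: ev.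
Qed.
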